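(* Let $N\ge1$, $\lambda_0,\dots,\lambda_N>0$ and $\gamma_0,\dots,\gamma_N\in\mathbb{C}$ distinct, and let $$\mathcal{R}(z)=\frac{\sum_{i=0}^N\sum_{j=i+1}^N\lambda_i^2\lambda_j^2(\gamma_i-\gamma_j)^2\prod_{k\neq i,j}(z-\gamma_k)}{\Big(\sum_{i=0}^N\lambda_i^2\Big)\Big(\sum_{j=0}^N\lambda_j^2\prod_{k\neq j}(z-\gamma_k)\Big)}$$ be the rational map of the JNR monopole with this data. Let $q(z)=\big(\frac{\lambda_0}{z-\gamma_0},\dots,\frac{\lambda_N}{z-\gamma_N}\big)$ and $q(\infty)=(\lambda_0,\dots,\lambda_N)$. Then there exists a unique $a=(a_0,\dots,a_N)\in\mathbb{C}^{N+1}$ such that $$\mathcal{R}(z)=\frac{\frac{a_0\lambda_0}{z-\gamma_0}+\cdots+\frac{a_N\lambda_N}{z-\gamma_N}}{\frac{\lambda_0^2}{z-\gamma_0}+\cdots+\frac{\lambda_N^2}{z-\gamma_N}}=\frac{\langle\bar a,q(z)\rangle}{\langle q(\infty),q(z)\rangle}.$$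
   Context: $\langle\cdot,\cdot\rangle$ is the standard Hermitian inner product on $\mathbb{C}^{N+1}$, conjugate-linear in the first factor, and $\bar a$ denotes the componentwise complex conjugate of $a$. *)

(* complex numbers C := R[i] over a real closed field R
   (mathcomp-real-closed); the paper's C is the case R = the reals. *)
From HB Require Import structures.
From mathcomp Require Import all_boot all_order all_algebra.
From mathcomp Require Export complex.
Set Implicit Arguments. Unset Strict Implicit. Unset Printing Implicit Defensive.
Import Order.TTheory GRing.Theory Num.Theory.
Local Open Scope ring_scope.
Local Open Scope complex_scope.

Section JNR.
Variable R : rcfType.
Local Notation C := R[i].

Definition hip (n : nat) (u v : 'rV[C]_n) : C := \sum_(i < n) conjc (u 0 i) * v 0 i.

Definition cconj (n : nat) (a : 'rV[C]_n) : 'rV[C]_n := \row_i conjc (a 0 i).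

Definition qz (n : nat) (lam : 'rV[R]_n) (gam : 'rV[C]_n) (z : C) : 'rV[C]_n :=
  \row_i ((lam 0 i)%:C / (z - gam 0 i)).
Definition qinf (n : nat) (lam : 'rV[R]_n) : 'rV[C]_n := \row_i (lam 0 i)%:C.

Definition jnr_num (n : nat) (lam : 'rV[R]_n) (gam : 'rV[C]_n) (z : C) : C :=
  \sum_(i < n) \sum_(j < n | (i < j)%N)
     ((lam 0 i) ^+ 2 * (lam 0 j) ^+ 2)%:C * (gam 0 i - gam 0 j) ^+ 2 *
     \prod_(k < n | (k != i) && (k != j)) (z - gam 0 k).
Definition jnr_den (n : nat) (lam : 'rV[R]_n) (gam : 'rV[C]_n) (z : C) : C :=
  (\sum_(i < n) (lam 0 i) ^+ 2)%:C *
  \sum_(j < n) ((lam 0 j) ^+ 2)%:C * \prod_(k < n | k != j) (z - gam 0 k).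
Definition jnr_map (n : nat) (lam : 'rV[R]_n) (gam : 'rV[C]_n) (z : C) : C :=
  jnr_num lam gam z / jnr_den lam gam z.

End JNR.

From HB Require Import structures.
From mathcomp Require Import all_boot all_order all_algebra complex.
From mathcomp Require Import ring.
Import Order.TTheory GRing.Theory Num.Theory.
Set Implicit Arguments.
Unset Strict Implicit.
Unset Printing Implicit Defensive.

Local Open Scope ring_scope.

(* Put w_k = z - gamma_k and mu_k = lambda_k^2.  Up to the common factor
   prod_k w_k, the numerator of R(z) is the off-diagonal part of the identity
     (sum_k mu_k w_k) (sum_k mu_k / w_k)
       = (sum_k mu_k)^2 + sum_(i<j) mu_i mu_j (w_j - w_i)^2 / (w_i w_j),
   and the denominator is (sum_k mu_k) <q(oo), q(z)>, since
   <q(oo), q(z)> = sum_k mu_k / w_k.  As sum_k mu_k w_k = (sum_k mu_k) (z - c)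
   with c the mu-weighted barycenter of the gamma_k, this gives
   R(z) = z - c - (sum_k mu_k) / <q(oo), q(z)>, which is the required quotient
   for a_k = lambda_k (gamma_k - c).  For uniqueness, if a and b both work then
   sum_k (a_k - b_k) lambda_k / (z - gamma_k) vanishes at all but finitely many
   z, so the polynomial sum_k (a_k - b_k) lambda_k prod_(m <> k) (X - gamma_m)
   is zero, and its value at gamma_k forces a_k = b_k. *)

Lemma sum_pairs_split (V : nmodType) n (f : 'I_n -> 'I_n -> V) :
  \sum_i \sum_j f i j =
  \sum_i f i i + \sum_(i < n) \sum_(j < n | (i < j)%N) (f i j + f j i).
Proof.
have row_split (i : 'I_n) : \sum_j f i j =
    f i i + \sum_(j < n | (i < j)%N) f i j + \sum_(j < n | (j < i)%N) f i j.
  rewrite (bigD1 i) //= (bigID (fun j : 'I_n => (i < j)%N)) /= addrA.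
  congr (_ + _ + _); apply: eq_bigl => j; rewrite -val_eqE /=.
    by case: ltngtP.
  by rewrite -leqNgt ltn_neqAle.
under eq_bigr do rewrite row_split.
rewrite !big_split /= -addrA; congr (_ + _).
under [RHS]eq_bigr do rewrite big_split /=.
rewrite big_split /=; congr (_ + _).
by rewrite (exchange_big_dep xpredT).
Qed.

Lemma sum_mul_sum_div (F : fieldType) n (mu w : 'I_n -> F) :
  (forall k, w k != 0) ->
  (\sum_i mu i * w i) * (\sum_i mu i / w i) =
  (\sum_i mu i) ^+ 2 +
  \sum_(i < n) \sum_(j < n | (i < j)%N) mu i * mu j * (w j - w i) ^+ 2 / (w i * w j).
Proof.
move=> w_neq0; rewrite expr2 !big_distrlr /= !sum_pairs_split -addrA.
congr (_ + _); first by apply: eq_bigr => i _; field.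
rewrite -big_split /=; apply: eq_bigr => i _.
rewrite -big_split /=; apply: eq_bigr => j _.
by field; rewrite !w_neq0.
Qed.

Lemma prodfD1_div (F : fieldType) (I : finType) (w : I -> F) i :
  w i != 0 -> \prod_(k | k != i) w k = (\prod_k w k) / w i.
Proof. by move=> wi_neq0; rewrite [in RHS](bigD1 i) //= mulrC mulKf. Qed.

Lemma prodfD2_div (F : fieldType) (I : finType) (w : I -> F) i j :
  i != j -> w i != 0 -> w j != 0 ->
  \prod_(k | (k != i) && (k != j)) w k = (\prod_k w k) / (w i * w j).
Proof.
move=> ij wi_neq0 wj_neq0.
rewrite [in RHS](bigD1 i) //= [in RHS](bigD1 j) 1?eq_sym //=.
by rewrite mulrA mulrC mulKf ?mulf_neq0.
Qed.

Lemma poly_eq0_off_roots (F : numDomainType) (p q : {poly F}) :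
  q != 0 -> (forall z, q.[z] != 0 -> p.[z] = 0) -> p = 0.
Proof.
move=> q_neq0 p_off.
have pq_roots z : root (p * q) z.
  by rewrite rootM !rootE; have [|/p_off ->] := eqVneq q.[z] 0; rewrite ?orbT ?eqxx.
suff /eqP : p * q = 0 by rewrite mulf_eq0 (negbTE q_neq0) orbF => /eqP.
apply: (@roots_geq_poly_eq0 _ _ [seq k%:R | k <- iota 0 (size (p * q))]).
- by apply/allP => z _; apply: pq_roots.
- by rewrite map_inj_uniq ?iota_uniq // => a b /eqP; rewrite eqr_nat => /eqP.
- by rewrite size_map size_iota.
Qed.

Section PartialFractions.
Variables (F : fieldType) (n : nat) (g : 'I_n -> F).

Definition nodal_poly : {poly F} := \prod_k ('X - (g k)%:P).

Definition pfrac_num (c : 'I_n -> F) : {poly F} :=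
  \sum_k c k *: \prod_(m | m != k) ('X - (g m)%:P).

Lemma nodal_poly_neq0 : nodal_poly != 0.
Proof. exact/monic_neq0/monic_prod_XsubC. Qed.

Lemma horner_nodal_poly z : nodal_poly.[z] = \prod_k (z - g k).
Proof. by rewrite horner_prod; under eq_bigr do rewrite hornerXsubC. Qed.

Lemma horner_pfrac_num c z :
  (pfrac_num c).[z] = \sum_k c k * \prod_(m | m != k) (z - g m).
Proof.
rewrite horner_sum; apply: eq_bigr => k _.
by rewrite hornerZ horner_prod; under eq_bigr do rewrite hornerXsubC.
Qed.

Lemma horner_pfrac_num_off_nodes c z : (forall k, z != g k) ->
  (pfrac_num c).[z] = nodal_poly.[z] * \sum_k c k / (z - g k).
Proof.
move=> z_off; rewrite horner_pfrac_num horner_nodal_poly mulr_sumr.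
apply: eq_bigr => k _; rewrite (prodfD1_div (w := fun m => z - g m)) ?subr_eq0 //.
by rewrite mulrCA mulrA.
Qed.

Hypothesis g_inj : injective g.

Lemma horner_pfrac_num_node c i :
  (pfrac_num c).[g i] = c i * \prod_(m | m != i) (g i - g m).
Proof.
rewrite horner_pfrac_num [LHS](bigD1 i) //= [X in _ + X]big1 ?addr0 //.
move=> k k_neq_i.
by rewrite (bigD1 i) 1?eq_sym //= subrr mul0r mulr0.
Qed.

Lemma pfrac_num_eq0 c : pfrac_num c = 0 -> forall k, c k = 0.
Proof.
move=> c0 k; have nodes_neq0 : \prod_(m | m != k) (g k - g m) != 0.
  by apply/prodf_neq0 => m mk; rewrite subr_eq0 (inj_eq g_inj) eq_sym.
apply/eqP; move: (horner_pfrac_num_node c k); rewrite c0 horner0 => /esym/eqP.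
by rewrite mulf_eq0 (negbTE nodes_neq0) orbF.
Qed.

End PartialFractions.

Local Open Scope complex_scope.

Section JNRMonopole.
Variables (R : rcfType) (n : nat) (lam : 'rV[R]_n) (gam : 'rV[R[i]]_n).

Let mu k : R[i] := ((lam 0 k) ^+ 2)%:C.
Let gamma k : R[i] := gam 0 k.
Let Lam : R[i] := \sum_k mu k.

Lemma hip_qinf_qz z :
  hip (qinf lam) (qz lam gam z) = \sum_k mu k / (z - gamma k).
Proof.
by apply: eq_bigr => k _; rewrite !mxE conjc_real /mu rmorphXn expr2 mulrA.
Qed.

Lemma hip_cconj_qz a z :
  hip (cconj a) (qz lam gam z) = \sum_k a 0 k * (lam 0 k)%:C / (z - gamma k).
Proof. by apply: eq_bigr => k _; rewrite !mxE conjcK mulrA. Qed.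

Lemma jnr_denE z : jnr_den lam gam z = Lam * (pfrac_num gamma mu).[z].
Proof. by rewrite /jnr_den rmorph_sum horner_pfrac_num. Qed.

Lemma jnr_den_off_nodes z : (forall k, z != gamma k) ->
  jnr_den lam gam z = Lam * (nodal_poly gamma).[z] * hip (qinf lam) (qz lam gam z).
Proof.
by move=> z_off; rewrite jnr_denE horner_pfrac_num_off_nodes // hip_qinf_qz mulrA.
Qed.

Lemma jnr_num_off_nodes z : (forall k, z != gamma k) ->
  jnr_num lam gam z = (nodal_poly gamma).[z] *
    \sum_(i < n) \sum_(j < n | (i < j)%N) mu i * mu j *
      ((z - gamma j) - (z - gamma i)) ^+ 2 / ((z - gamma i) * (z - gamma j)).
Proof.
move=> z_off; have w_neq0 k : z - gamma k != 0 by rewrite subr_eq0.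
rewrite /jnr_num horner_nodal_poly mulr_sumr; apply: eq_bigr => i _.
rewrite mulr_sumr; apply: eq_bigr => j ij.
have i_neq_j : i != j by rewrite -val_eqE /= ltn_eqF.
rewrite (prodfD2_div (w := fun k => z - gamma k)) // rmorphM /mu.
by rewrite /gamma; ring.
Qed.

Definition jnr_barycenter : R[i] := (\sum_k mu k * gamma k) / Lam.

Definition jnr_coef : 'rV[R[i]]_n :=
  \row_k ((lam 0 k)%:C * (gamma k - jnr_barycenter)).

Lemma jnr_den_factors_neq0 z : (forall k, z != gamma k) -> jnr_den lam gam z != 0 ->
  [/\ Lam != 0, (nodal_poly gamma).[z] != 0 & hip (qinf lam) (qz lam gam z) != 0].
Proof.
move=> z_off; rewrite jnr_den_off_nodes // !mulf_eq0 !negb_or.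
by move=> /andP[/andP[]].
Qed.

Lemma jnr_map_off_nodes z : (forall k, z != gamma k) -> jnr_den lam gam z != 0 ->
  jnr_map lam gam z = z - jnr_barycenter - Lam / hip (qinf lam) (qz lam gam z).
Proof.
move=> z_off den_neq0.
have [Lam_neq0 P_neq0 B_neq0] := jnr_den_factors_neq0 z_off den_neq0.
have w_neq0 k : z - gamma k != 0 by rewrite subr_eq0.
have first_moment : \sum_k mu k * (z - gamma k) = Lam * (z - jnr_barycenter).
  under eq_bigr do rewrite mulrBr.
  by rewrite sumrB -mulr_suml mulrBr mulrCA mulfV // mulr1.
rewrite /jnr_map jnr_num_off_nodes // jnr_den_off_nodes //.
set S := \sum_(i < n) _.
have -> : S = Lam * (z - jnr_barycenter) * hip (qinf lam) (qz lam gam z) - Lam ^+ 2.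
  by rewrite -first_moment hip_qinf_qz sum_mul_sum_div // addrC addKr.
by field; rewrite Lam_neq0 P_neq0 B_neq0.
Qed.

Lemma hip_jnr_coef z : (forall k, z != gamma k) ->
  hip (cconj jnr_coef) (qz lam gam z) =
  (z - jnr_barycenter) * hip (qinf lam) (qz lam gam z) - Lam.
Proof.
move=> z_off; rewrite hip_cconj_qz hip_qinf_qz mulr_sumr -sumrB.
apply: eq_bigr => k _; rewrite mxE /mu rmorphXn.
by field; rewrite subr_eq0.
Qed.

Lemma jnr_map_coef z : (forall k, z != gamma k) -> jnr_den lam gam z != 0 ->
  jnr_map lam gam z =
  hip (cconj jnr_coef) (qz lam gam z) / hip (qinf lam) (qz lam gam z).
Proof.
move=> z_off den_neq0; have [_ _ B_neq0] := jnr_den_factors_neq0 z_off den_neq0.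
by rewrite jnr_map_off_nodes // hip_jnr_coef // mulrBl mulfK.
Qed.

Hypothesis lam_neq0 : forall k, lam 0 k != 0.
Hypothesis gamma_inj : injective gamma.

Lemma jnr_ratio_inj a b :
  (forall z, (forall k, z != gamma k) -> jnr_den lam gam z != 0 ->
    hip (cconj a) (qz lam gam z) / hip (qinf lam) (qz lam gam z) =
    hip (cconj b) (qz lam gam z) / hip (qinf lam) (qz lam gam z)) ->
  a = b.
Proof.
move=> ab_ratio; apply/rowP => k0.
have mu_neq0 k : mu k != 0.
  by rewrite fmorph_eq0 expf_eq0 (negbTE (lam_neq0 k)) andbF.
have Lam_neq0 : Lam != 0.
  rewrite /Lam -rmorph_sum fmorph_eq0 psumr_neq0 => [|k _]; last exact: sqr_ge0.
  apply/hasP; exists k0; first exact: mem_index_enum.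
  by rewrite exprn_even_gt0 ?lam_neq0 ?orbT.
have den_poly_neq0 : nodal_poly gamma * pfrac_num gamma mu != 0.
  rewrite mulf_neq0 ?nodal_poly_neq0 //.
  by apply: contra (mu_neq0 k0) => /eqP/(pfrac_num_eq0 gamma_inj) ->.
pose c k := (a 0 k - b 0 k) * (lam 0 k)%:C.
suff /(pfrac_num_eq0 gamma_inj) /(_ k0) /eqP : pfrac_num gamma c = 0.
  by rewrite mulf_eq0 fmorph_eq0 (negbTE (lam_neq0 k0)) orbF subr_eq0 => /eqP.
apply: (poly_eq0_off_roots den_poly_neq0) => z.
rewrite hornerM mulf_eq0 negb_or => /andP[P_neq0 D_neq0].
have z_off k : z != gamma k.
  apply: contra P_neq0 => /eqP ->.
  by rewrite horner_nodal_poly (bigD1 k) //= subrr mul0r.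
have den_neq0 : jnr_den lam gam z != 0 by rewrite jnr_denE mulf_neq0.
have [_ _ B_neq0] := jnr_den_factors_neq0 z_off den_neq0.
have /(divIf B_neq0) /eqP := ab_ratio z z_off den_neq0.
rewrite !hip_cconj_qz -subr_eq0 -sumrB => /eqP ab0.
rewrite horner_pfrac_num_off_nodes //; under eq_bigr do rewrite /c !mulrBl.
by rewrite ab0 mulr0.
Qed.

End JNRMonopole.

Theorem mainTheorem6 (R : rcfType) (N : nat) (hN : (1 <= N)%N)
    (lam : 'rV[R]_N.+1) (gam : 'rV[R[i]]_N.+1)
    (hlam : forall i, 0 < lam 0 i)
    (hgam : forall i j, gam 0 i = gam 0 j -> i = j) :
  exists! a : 'rV[R[i]]_N.+1,
    forall z : R[i],
      (forall k, z != gam 0 k) ->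
      jnr_den lam gam z != 0 ->
      jnr_map lam gam z = hip (cconj a) (qz lam gam z) / hip (qinf lam) (qz lam gam z).
Proof.
have lam_neq0 k : lam 0 k != 0 by rewrite gt_eqF.
have gam_inj : injective (fun k => gam 0 k) by move=> i j /hgam.
exists (jnr_coef lam gam); split=> [z z_off den_neq0 | a a_spec].
  exact: jnr_map_coef.
apply: (jnr_ratio_inj lam_neq0 gam_inj) => z z_off den_neq0.
by rewrite -jnr_map_coef // a_spec.
Qed.
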